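(* Let $p$ be a prime and let $Q\in\mathbb{Q}_p[X_1,\dots,X_n]$ be a nonsingular quadratic form which is isotropic over $\mathbb{Q}_p$. Then $R(Q(\mathbb{Z}_p^n))=\mathbb{Q}_p$. In particular, $R(Q(\mathbb{Z}^n))$ is dense in $\mathbb{Q}_p$.
   Context: A quadratic form $Q=\sum_{i,j}a_{ij}X_iX_j$ ($a_{ij}=a_{ji}$, not all zero) is nonsingular if $\det[a_{ij}]\neq 0$; it is isotropic over $\mathbb{Q}_p$ if $Q(\mathbf{x})=0$ for some nonzero $\mathbf{x}\in\mathbb{Q}_p^n$. $\mathbb{Z}_p$ denotes the $p$-adic integers. For a subset $A$ of a field, $R(A)=\{a/b: a,b\in A,\ b\neq 0\}$. For $S\subseteq\mathbb{Q}_p^n$, $Q(S)=\{Q(\mathbf{x}):\mathbf{x}\in S\}$. *)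

From mathcomp Require Import all_boot all_order all_algebra.
Set Implicit Arguments. Unset Strict Implicit. Unset Printing Implicit Defensive.
Import Order.TTheory GRing.Theory Num.Theory.
Local Open Scope ring_scope.

Section Padic.
Variables (K : fieldType) (v : K -> int).

(* x and y are congruent modulo p^k (v x-y >= k, with v(0) = +oo) *)
Definition vclose (k : int) (x y : K) : Prop := x = y \/ (x != y /\ k <= v (x - y)).

Definition vint (x : K) : Prop := x = 0 \/ 0 <= v x.

Definition vcauchy (u : nat -> K) : Prop :=
  forall k : int, exists N : nat, forall m n, (N <= m)%N -> (N <= n)%N -> vclose k (u m) (u n).

Definition vconverges (u : nat -> K) (l : K) : Prop :=
  forall k : int, exists N : nat, forall n, (N <= n)%N -> vclose k (u n) l.

(* (K, v) is (a copy of) the field Q_p of p-adic numbers: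
   a discrete valuation, p is a uniformizer, every integer is congruent
   modulo p to a digit 0..p-1 (residue field F_p), and K is complete. *)
Definition is_Qp (p : nat) : Prop :=
  [/\ forall x y, x != 0 -> y != 0 -> v (x * y) = v x + v y,
      forall x y, x != 0 -> y != 0 -> x + y != 0 -> Num.min (v x) (v y) <= v (x + y),
      p%:R != 0 :> K /\ v p%:R = 1,
      forall x, vint x -> exists2 d : nat, (d < p)%N & vclose 1 x d%:R
    & forall u, vcauchy u -> exists l, vconverges u l].

Definition qform (n : nat) (a : 'M[K]_n) (x : 'I_n -> K) : K :=
  \sum_(i < n) \sum_(j < n) a i j * x i * x j.

Definition ratios (A : K -> Prop) : K -> Prop :=
  fun z => exists a b, [/\ A a, A b, b != 0 & z = a / b].

Definition qimage (n : nat) (a : 'M[K]_n) (S : ('I_n -> K) -> Prop) : K -> Prop :=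
  fun c => exists x, S x /\ c = qform a x.

Definition dense_v (D : K -> Prop) : Prop :=
  forall z : K, forall k : int, exists w, D w /\ vclose k z w.

End Padic.

(* An isotropic nonsingular form over a field of characteristic not 2 is
   universal: if Q(x) = 0 with x != 0 and B(x, e) != 0, then
   t |-> Q(t x + e) = 2 t B(x, e) + Q(e) takes every value.  Writing z = Q(x) and
   1 = Q(y) and multiplying x, y by a common power p^N makes them integral
   without changing the ratio Q(x) / Q(y) = z.  For density, integer vectors
   approximate integral ones p-adically, Q is uniformly continuous on Z_p^n,
   and the ratio is continuous where the denominator is nonzero. *)
From mathcomp Require Import all_boot all_order all_algebra.
From mathcomp Require Import zify ring lra.
Import Order.TTheory GRing.Theory Num.Theory.
Set Implicit Arguments. Unset Strict Implicit.
Local Open Scope ring_scope.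

Section QuadraticForm.
Variables (K : fieldType) (n : nat) (a : 'M[K]_n).

Definition qbil (x y : 'I_n -> K) : K := \sum_i \sum_j a i j * x i * y j.

Lemma qformZ t x : qform a (fun i => t * x i) = t ^+ 2 * qform a x.
Proof.
rewrite /qform !mulr_sumr; apply: eq_bigr => i _.
rewrite !mulr_sumr; apply: eq_bigr => j _ /=; ring.
Qed.

Lemma qformZD t x y :
  qform a (fun i => t * x i + y i) =
  t ^+ 2 * qform a x + t * (qbil x y + qbil y x) + qform a y.
Proof.
rewrite /qform /qbil mulrDr !mulr_sumr -!big_split; apply: eq_bigr => i _.
rewrite !mulr_sumr -!big_split; apply: eq_bigr => j _ /=; ring.
Qed.

Hypothesis a_sym : a^T = a.

Lemma qbilC x y : qbil y x = qbil x y.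
Proof.
rewrite /qbil exchange_big; apply: eq_bigr => i _; apply: eq_bigr => j _.
have -> : a j i = a i j by rewrite -{1}a_sym mxE.
ring.
Qed.

Hypothesis det_a_neq0 : \det a != 0.

Lemma qbil_nondegenerate x : (exists i, x i != 0) -> exists y, qbil x y != 0.
Proof.
case=> i0 xi0_neq0; pose u : 'rV[K]_n := \row_i x i.
have u_neq0 : u != 0.
  by apply: contraNneq xi0_neq0 => /rowP/(_ i0); rewrite !mxE => ->.
have ua_neq0 : u *m a != 0.
  by apply: contraNneq det_a_neq0 => ua0; apply/det0P; exists u.
have [j0 uaj0] : exists j0, (u *m a) 0 j0 != 0.
  apply/existsP; apply: contraNT ua_neq0; rewrite negb_exists => /forallP ua0.
  by apply/eqP/rowP => j; rewrite [RHS]mxE; apply/eqP/negPn/ua0.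
exists (fun j => (j == j0)%:R); apply: etrans uaj0; congr (_ != 0).
rewrite /qbil mxE; apply: eq_bigr => i _.
rewrite (bigD1 j0) //= big1 => [|j /negbTE ->]; last by rewrite mulr0.
by rewrite eqxx mxE mulr1 addr0 mulrC.
Qed.

Lemma isotropic_qform_surjective : 2%:R != 0 :> K ->
  (exists x : 'I_n -> K, (exists i, x i != 0) /\ qform a x = 0) ->
  forall z, exists y, qform a y = z.
Proof.
move=> two_neq0 [x [x_neq0 Qx0]] z.
have [e Bxe_neq0] := qbil_nondegenerate x_neq0.
exists (fun i => (z - qform a e) / (2%:R * qbil x e) * x i + e i).
by rewrite qformZD Qx0 [qbil e x]qbilC; field; rewrite Bxe_neq0.
Qed.

End QuadraticForm.

Lemma finite_int_bounded (I : finType) (f : I -> int) :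
  exists M : nat, forall i, f i <= M.
Proof.
exists (\sum_i `|f i|)%N => i.
have : (`|f i| <= \sum_i `|f i|)%N by rewrite (bigD1 i) //= leq_addr.
lia.
Qed.

Section ValuedField.
Variables (K : fieldType) (v : K -> int).
Hypothesis vM : forall x y : K, x != 0 -> y != 0 -> v (x * y) = v x + v y.
Hypothesis vD : forall x y : K, x != 0 -> y != 0 -> x + y != 0 ->
  Num.min (v x) (v y) <= v (x + y).

(* The ball of valuation >= k; [v 0] is a junk value, so 0 is put in by hand. *)
Definition vge (k : int) (x : K) : Prop := x = 0 \/ k <= v x.

Lemma v1 : v 1 = 0.
Proof.
have one_neq0 : (1 : K) != 0 by exact: oner_neq0.
by have := vM one_neq0 one_neq0; rewrite mulr1; lia.
Qed.

Lemma vN x : x != 0 -> v (- x) = v x.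
Proof.
have N1_neq0 : (-1 : K) != 0 by rewrite oppr_eq0 oner_neq0.
have vN1 : v (-1) = 0 by have := vM N1_neq0 N1_neq0; rewrite mulrNN mulr1 v1; lia.
by move=> x_neq0; rewrite -mulN1r vM // vN1 add0r.
Qed.

Lemma vV x : x != 0 -> v x^-1 = - v x.
Proof.
by move=> x_neq0; have := vM x_neq0 (invr_neq0 x_neq0); rewrite mulfV // v1; lia.
Qed.

Lemma vge_v x : vge (v x) x.
Proof. by right. Qed.

Lemma vge0 k : vge k 0.
Proof. by left. Qed.

Lemma vgeW k l x : l <= k -> vge k x -> vge l x.
Proof. by move=> lk [->|kx]; [left | right; lia]. Qed.

Lemma vgeD k x y : vge k x -> vge k y -> vge k (x + y).
Proof.
case=> [->|kx]; first by rewrite add0r.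
case=> [->|ky]; first by rewrite addr0; right.
have [->|x_neq0] := eqVneq x 0; first by rewrite add0r; right.
have [->|y_neq0] := eqVneq y 0; first by rewrite addr0; right.
have [|xy_neq0] := eqVneq (x + y) 0; first by left.
by right; move: (vD x_neq0 y_neq0 xy_neq0); rewrite ge_min => /orP[]; lia.
Qed.

Lemma vgeN k x : vge k x -> vge k (- x).
Proof.
have [->|x_neq0] := eqVneq x 0; first by rewrite oppr0; left.
by case=> [->|kx]; [left; rewrite oppr0 | right; rewrite vN].
Qed.

Lemma vgeM k l x y : vge k x -> vge l y -> vge (k + l) (x * y).
Proof.
have [->|x_neq0] := eqVneq x 0; first by rewrite mul0r; left.
have [->|y_neq0] := eqVneq y 0; first by rewrite mulr0; left.
case=> [x0|kx]; first by rewrite x0 eqxx in x_neq0.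
case=> [y0|ly]; first by rewrite y0 eqxx in y_neq0.
by right; rewrite vM //; lia.
Qed.

Lemma vge_div k x u : u != 0 -> vge k x -> vge (k - v u) (x / u).
Proof. by move=> u_neq0 kx; apply: vgeM kx _; right; rewrite vV. Qed.

Lemma vge_sum k (I : finType) (F : I -> K) :
  (forall i, vge k (F i)) -> vge k (\sum_i F i).
Proof. by move=> kF; apply: big_ind => //; [apply: vge0 | apply: vgeD]. Qed.

Lemma vclose_vge k x y : vge k (x - y) -> vclose v k x y.
Proof.
have [->|x_neq_y] := eqVneq x y; first by left.
by case=> [/eqP|kxy]; [rewrite subr_eq0 (negbTE x_neq_y) | right].
Qed.

Lemma v_eq_of_vge_sub x y : y != 0 -> vge (v y + 1) (x - y) -> x != 0 /\ v x = v y.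
Proof.
move=> y_neq0; have [/eqP|xy_neq0] := eqVneq (x - y) 0.
  by rewrite subr_eq0 => /eqP ->.
case=> [xy0|vxy]; first by rewrite xy0 eqxx in xy_neq0.
have [x0|x_neq0] := eqVneq x 0; first by move: vxy; rewrite x0 sub0r vN //; lia.
split=> //.
have := vD y_neq0 xy_neq0; rewrite subrKC => /(_ x_neq0).
have := vD x_neq0 (y := - (x - y)); rewrite oppr_eq0 vN // opprB subrKC.
by move=> /(_ xy_neq0 y_neq0); rewrite !ge_min => /orP[] ? /orP[] ?; lia.
Qed.

Lemma vge_ratio_sub c N (x y x' y' : K) : y != 0 -> v y < N -> c <= 0 ->
  vge c (x / y) -> vge N (x' - x) -> vge N (y' - y) ->
  y' != 0 /\ vge (N + c - v y) (x / y - x' / y').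
Proof.
move=> y_neq0 vyN c_le0 cz Nx Ny.
have [y'_neq0 vy'] : y' != 0 /\ v y' = v y.
  by apply: v_eq_of_vge_sub y_neq0 (vgeW _ Ny); lia.
split=> //; rewrite -vy'.
have -> : x / y - x' / y' = (- (x' - x) + x / y * (y' - y)) / y'.
  by field; rewrite y_neq0 y'_neq0.
apply: vge_div => //; apply: vgeD; first by apply: vgeW (vgeN Nx); lia.
by apply: vgeW (vgeM cz Ny); lia.
Qed.

Section QuadraticFormContinuity.
Variables (n : nat) (a : 'M[K]_n) (c : int).
Hypothesis a_vge : forall i j, vge c (a i j).

Lemma qform_sub_vge (N : nat) (x y : 'I_n -> K) : (forall i, vge 0 (x i)) ->
  (forall i, vge N (y i - x i)) -> vge (N%:Z + c) (qform a y - qform a x).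
Proof.
move=> x_int Nxy.
have y_int i : vge 0 (y i).
  by rewrite -(subrK (x i) (y i)); apply: vgeD (x_int i); apply: vgeW (Nxy i).
rewrite /qform -sumrB; apply: vge_sum => i; rewrite -sumrB; apply: vge_sum => j.
have -> : a i j * y i * y j - a i j * x i * x j =
          a i j * ((y i - x i) * y j + x i * (y j - x j)) by ring.
rewrite addrC; apply: vgeM; first exact: a_vge.
by apply: vgeD; apply: vgeW (vgeM _ _) => //; lia.
Qed.

End QuadraticFormContinuity.

Section Uniformizer.
Variable p : nat.
Hypotheses (p_neq0 : p%:R != 0 :> K) (vp : v p%:R = 1).
Hypothesis residue_digits :
  forall x, vint v x -> exists2 d : nat, (d < p)%N & vclose v 1 x d%:R.

Lemma two_neq0 : 2%:R != 0 :> K.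
Proof.
apply: contra_neq p_neq0 => two0; move: vp.
rewrite (divn_eq p 2) natrD natrM two0 mulr0 add0r.
by case: (p %% 2)%N (ltn_pmod p (isT : 0 < 2)%N) => [|[|//]] _; rewrite ?v1.
Qed.

Lemma vge_pexp (m : nat) : vge m (p%:R ^+ m).
Proof.
elim: m => [|m IH]; first by right; rewrite v1.
by rewrite exprS; apply: vgeW (vgeM (vge_v p%:R) IH); rewrite vp; lia.
Qed.

Lemma int_approx (N : nat) x : vge 0 x -> exists m : int, vge N (x - m%:~R).
Proof.
elim: N x => [|N IH] x x_int; first by exists 0; rewrite subr0.
have [d _ xd] := residue_digits x_int.
have vxd : vge 1 (x - d%:R) by case: xd => [->|[]]; [rewrite subrr; left | right].
have /IH [m Nm] : vge 0 ((x - d%:R) / p%:R).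
  by have := vge_div p_neq0 vxd; rewrite vp subrr.
exists (d%:Z + p%:Z * m).
have -> : x - (d%:Z + p%:Z * m)%:~R = p%:R * ((x - d%:R) / p%:R - m%:~R).
  by rewrite intrD intrM /=; field.
by apply: vgeW (vgeM (vge_pexp 1) Nm); lia.
Qed.

Lemma int_vector_approx n (N : nat) (x : 'I_n -> K) : (forall i, vge 0 (x i)) ->
  exists m : 'I_n -> int, forall i, vge N ((m i)%:~R - x i).
Proof.
move=> x_int; have [m Nm] := fin_all_exists (fun i => int_approx N (x_int i)).
by exists m => i; rewrite -opprB; apply: vgeN.
Qed.

Lemma scale_integral n (x : 'I_n -> K) :
  exists N : nat, forall M : nat, (N <= M)%N -> forall i, vge 0 (p%:R ^+ M * x i).
Proof.
have [N vxN] := finite_int_bounded (fun i => - v (x i)).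
exists N => M NM i; apply: vgeW (vgeM (vge_pexp M) (vge_v (x i))).
by have := vxN i; lia.
Qed.

Section IsotropicForm.
Variables (n : nat) (a : 'M[K]_n).
Hypotheses (a_sym : a^T = a) (det_a_neq0 : \det a != 0).
Hypothesis a_isotropic :
  exists x : 'I_n -> K, (exists i, x i != 0) /\ qform a x = 0.

Lemma integral_qform_ratio z : exists x y : 'I_n -> K,
  [/\ forall i, vge 0 (x i), forall i, vge 0 (y i),
      qform a y != 0 & qform a x = z * qform a y].
Proof.
have Q_onto := isotropic_qform_surjective a_sym det_a_neq0 two_neq0 a_isotropic.
have [[x0 Qx0] [y0 Qy0]] := (Q_onto z, Q_onto 1).
have [[Nx x_int] [Ny y_int]] := (scale_integral x0, scale_integral y0).
exists (fun i => p%:R ^+ (Nx + Ny) * x0 i), (fun i => p%:R ^+ (Nx + Ny) * y0 i).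
split; [exact/x_int/leq_addr | exact/y_int/leq_addl | |].
- by rewrite qformZ Qy0 mulr1 !expf_neq0.
- by rewrite !qformZ Qx0 Qy0; ring.
Qed.

Lemma int_qform_ratio_approx z k : exists mx my : 'I_n -> int,
  let Q m := qform a (fun i => (m i)%:~R) in Q my != 0 /\ vge k (z - Q mx / Q my).
Proof.
have [x [y [x_int y_int Qy_neq0 Qxy]]] := integral_qform_ratio z.
have [MA vaMA] := finite_int_bounded (fun ij : 'I_n * 'I_n => - v (a ij.1 ij.2)).
have a_vge i j : vge (- MA%:Z) (a i j).
  by apply: vgeW (vge_v _); have /= := vaMA (i, j); lia.
pose N := (`|k| + MA + `|v z| + `|v (qform a y)| + 1)%N.
have [[mx Nmx] [my Nmy]] := (int_vector_approx N x_int, int_vector_approx N y_int).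
have z_vge : vge (Num.min 0 (v z)) (qform a x / qform a y).
  by rewrite Qxy mulfK //; right; rewrite ge_min lexx orbT.
have vQyN : v (qform a y) < N%:Z - MA%:Z by rewrite /N; lia.
have [|Qmy_neq0 close] := vge_ratio_sub Qy_neq0 vQyN _ z_vge
  (qform_sub_vge a_vge x_int Nmx) (qform_sub_vge a_vge y_int Nmy).
  by rewrite ge_min lexx.
exists mx, my; split=> //; rewrite -[z](mulfK Qy_neq0) -Qxy.
by apply: vgeW close; rewrite /N; lia.
Qed.

End IsotropicForm.
End Uniformizer.
End ValuedField.

Theorem corollary1 (p : nat) (K : fieldType) (v : K -> int) (n : nat)
    (a : 'M[K]_n) :
  prime p -> is_Qp v p ->
  a^T = a -> a != 0 -> \det a != 0 ->
  (exists x : 'I_n -> K, (exists i, x i != 0) /\ qform a x = 0) ->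
  (forall z : K, ratios (qimage a (fun x => forall i, vint v (x i))) z) /\
  dense_v v (ratios (qimage a (fun x => exists m : 'I_n -> int, forall i, x i = (m i)%:~R))).
Proof.
move=> _ [vM vD [p_neq0 vp] digits _] a_sym _ det_a_neq0 a_iso; split.
  move=> z; have [x [y [x_int y_int Qy_neq0 Qxy]]] :=
    integral_qform_ratio vM p_neq0 vp a_sym det_a_neq0 a_iso z.
  exists (qform a x), (qform a y); split => //; [by exists x | by exists y |].
  by rewrite Qxy mulfK.
move=> z k; have [mx [my [Qmy_neq0 close]]] :=
  int_qform_ratio_approx vM vD p_neq0 vp digits a_sym det_a_neq0 a_iso z k.
pose int_vec (m : 'I_n -> int) i : K := (m i)%:~R.
exists (qform a (int_vec mx) / qform a (int_vec my)); split; last exact: vclose_vge.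
exists (qform a (int_vec mx)), (qform a (int_vec my)); split=> //.
- by exists (int_vec mx); split=> //; exists mx.
- by exists (int_vec my); split=> //; exists my.
Qed.
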